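(* Let $t\in[n]$ and let $S\subseteq N$ be a $t$-switchable set (maximal or not) such that $P^{\langle t\rangle}_S$ is an associated prime of $\mathcal{I}^{\langle t\rangle}$. Then $\tilde{\mathcal{I}}^{\langle t\rangle}_S$ is contained in the $P^{\langle t\rangle}_S$-primary component of $\mathcal{I}^{\langle t\rangle}$ (in any primary decomposition of $\mathcal{I}^{\langle t\rangle}$).
   Context: Fix positive integers $n, r_1,\dots,r_n$, let $N=[r_1]\times\cdots\times[r_n]$, and let $R$ be the polynomial ring over a field in the variables $x_a$, $a\in N$. For $a,b\in N$ and $i\in[n]$, ${\rm s}(i,a,b)\in N$ has $i$-th component $b_i$ and other components equal to those of $a$. Let $d(a,b)=\#\{j: a_j\neq b_j\}$ and $f_{i,a,b}=x_ax_b-x_{{\rm s}(i,a,b)}x_{{\rm s}(i,b,a)}$. Let $\mathcal{I}^{\langle t\rangle}=(f_{i,a,b}: a,b\in N,\ d(a,b)=2,\ i\in[t])$. A subset $S\subseteq N$ is $t$-switchable if for all $a,b\in S$ with $d(a,b)=2$ and all $i\in[t]$, ${\rm s}(i,a,b)\in S$. Elements $a,b\in S$ are connected in $S$ if there are $a_0=a,\dots,a_k=b$ in $S$ with $d(a_{j-1},a_j)\le 1$ for all $j$. For $t$-switchable $S$: $\tilde{\mathcal{I}}^{\langle t\rangle}_S=(f_{i,a,b}: i\in[t],\ a,b \text{ connected in } S)$, $\mathrm{Var}^{\langle t\rangle}_S=(x_a: a\notin S)$, $P^{\langle t\rangle}_S=\mathrm{Var}^{\langle t\rangle}_S+\tilde{\mathcal{I}}^{\langle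 t\rangle}_S$. *)

From HB Require Import structures.
From mathcomp Require Import all_boot all_algebra.
From mathcomp Require Import mpoly.

Set Implicit Arguments.
Unset Strict Implicit.
Unset Printing Implicit Defensive.

Import GRing.Theory.
Local Open Scope ring_scope.

Section Ideals.
Variable R : comNzRingType.

Definition is_ideal (I : R -> Prop) : Prop :=
  [/\ I 0, (forall x y, I x -> I y -> I (x + y)) & (forall a x, I x -> I (a * x))].

Definition ideal_gen (G : R -> Prop) : R -> Prop :=
  fun p => exists s : seq (R * R), (forall q, q \in s -> G q.2) /\
                                  p = \sum_(q <- s) q.1 * q.2.

Definition proper_ideal (I : R -> Prop) : Prop := is_ideal I /\ ~ I 1.

Definition prime_ideal (P : R -> Prop) : Prop :=
  proper_ideal P /\ forall a b, P (a * b) -> P a \/ P b.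

Definition radical (I : R -> Prop) : R -> Prop := fun p => exists k : nat, I (p ^+ k).

Definition primary_ideal (Q : R -> Prop) : Prop :=
  proper_ideal Q /\ forall a b, Q (a * b) -> Q a \/ radical Q b.

Definition associated_prime (I P : R -> Prop) : Prop :=
  prime_ideal P /\ exists f : R, forall p, P p <-> I (p * f).

Definition primary_decomposition (I : R -> Prop) (m : nat) (Q : 'I_m -> R -> Prop) : Prop :=
  [/\ forall j, primary_ideal (Q j),
      forall p, I p <-> (forall j, Q j p)
    & forall j k, (forall p, radical (Q j) p <-> radical (Q k) p) -> j = k].

Definition subideal (I J : R -> Prop) : Prop := forall p, I p -> J p.

End Ideals.

Section Setting.
Variables (n : nat) (r : 'I_n -> nat).

(* N = [r_1] x ... x [r_n] (0-based coordinates) *)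
Definition Nset := {dffun forall j : 'I_n, 'I_(r j)}.

Definition sw (i : 'I_n) (a b : Nset) : Nset :=
  finfun (fun j : 'I_n => if j == i then b j else a j).

Definition dist (a b : Nset) : nat := #|[set j : 'I_n | a j != b j]|.

(* t-switchable sets; i ranges over [t], i.e. 0-based indices i < t *)
Definition switchable (t : nat) (S : {set Nset}) : Prop :=
  forall a b, a \in S -> b \in S -> dist a b = 2 ->
  forall i : 'I_n, (i < t)%N -> sw i a b \in S.

Definition connected_in (S : {set Nset}) (a b : Nset) : bool :=
  [&& a \in S, b \in S &
      connect [rel x y | [&& x \in S, y \in S & (dist x y <= 1)%N]] a b].

Variable K : fieldType.

Definition Rpoly := {mpoly K[#|Nset|]}.

Definition xv (a : Nset) : Rpoly := 'X_(enum_rank a).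

Definition fgen (i : 'I_n) (a b : Nset) : Rpoly :=
  xv a * xv b - xv (sw i a b) * xv (sw i b a).

Definition Ibin (t : nat) : Rpoly -> Prop :=
  ideal_gen (fun p => exists (i : 'I_n) (a b : Nset),
                  [/\ (i < t)%N, dist a b = 2 & p = fgen i a b]).

Definition Itilde (t : nat) (S : {set Nset}) : Rpoly -> Prop :=
  ideal_gen (fun p => exists (i : 'I_n) (a b : Nset),
                  [/\ (i < t)%N, connected_in S a b & p = fgen i a b]).

(* Var^<t>_S + \tilde I^<t>_S, generated by the union of generators *)
Definition Pideal (t : nat) (S : {set Nset}) : Rpoly -> Prop :=
  ideal_gen (fun p => (exists a : Nset, a \notin S /\ p = xv a) \/
                      exists (i : 'I_n) (a b : Nset),
                        [/\ (i < t)%N, connected_in S a b & p = fgen i a b]).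

End Setting.

(* If a and b are connected in S, walk along a path a = c_0, ..., c_k = b
   in S.  A three-term binomial identity shows inductively that
   u * f_{i,a,s(i,c_l,b)} lies in I^<t> for a monomial u in the variables
   x_c with c in S; switchability of S keeps every point s(i,c_l,a) used in
   S.  At l = k this gives u * f_{i,a,b} in I^<t>.  The monomial u is not in
   P_S, because P_S vanishes at the 0/1 indicator point of S while u takes
   the value 1 there.  Hence f_{i,a,b} lies in every primary ideal containing
   I^<t> whose radical is P_S. *)
From HB Require Import structures.
From mathcomp Require Import all_boot all_algebra.
From mathcomp Require Import mpoly.
From mathcomp Require Import ring.

Set Implicit Arguments.
Unset Strict Implicit.
Unset Printing Implicit Defensive.
Import GRing.Theory.
Local Open Scope ring_scope.

Section IdealGen.
Variable R : comNzRingType.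
Implicit Types (G I P Q : R -> Prop) (a f g u x y : R).

Lemma ideal_gen0 G : ideal_gen G 0.
Proof. by exists [::]; rewrite big_nil. Qed.

Lemma ideal_gen_mem G g : G g -> ideal_gen G g.
Proof.
move=> Gg; exists [:: (1, g)]; split; first by move=> q; rewrite inE => /eqP ->.
by rewrite big_seq1 mul1r.
Qed.

Lemma ideal_genD G x y : ideal_gen G x -> ideal_gen G y -> ideal_gen G (x + y).
Proof.
move=> [s [Gs ->]] [s' [Gs' ->]]; exists (s ++ s'); split; last by rewrite big_cat.
by move=> q; rewrite mem_cat => /orP[]; [apply: Gs | apply: Gs'].
Qed.

Lemma ideal_genMl G a x : ideal_gen G x -> ideal_gen G (a * x).
Proof.
move=> [s [Gs ->]]; exists [seq (a * q.1, q.2) | q <- s]; split.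
  by move=> q /mapP[q' q's ->] /=; apply: Gs.
by rewrite big_map big_distrr /=; apply: eq_bigr => q _; rewrite mulrA.
Qed.

Lemma ideal_gen_min G I : is_ideal I -> (forall g, G g -> I g) ->
  subideal (ideal_gen G) I.
Proof.
move=> [I0 ID IM] GI _ [s [Gs ->]]; elim: s Gs => [|q s IHs] Gs.
  by rewrite big_nil.
rewrite big_cons; apply: ID; first by apply/IM/GI/Gs; rewrite mem_head.
by apply: IHs => q' q's; apply: Gs; rewrite inE q's orbT.
Qed.

Lemma kernel_is_ideal (S : nzRingType) (phi : {rmorphism R -> S}) :
  is_ideal (fun x => phi x = 0).
Proof.
split; first exact: rmorph0.
  by move=> x y phix0 phiy0; rewrite rmorphD phix0 phiy0 addr0.
by move=> a x phix0; rewrite rmorphM phix0 mulr0.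
Qed.

Lemma primary_mulr_cancel Q P f u : primary_ideal Q ->
  (forall p, radical Q p <-> P p) -> ~ P u -> Q (f * u) -> Q f.
Proof. by move=> [_ Qprimary] radQ Pu /Qprimary[// | /radQ]. Qed.

End IdealGen.

Lemma connect_ind (T : finType) (e : rel T) (P : T -> Prop) x y :
  connect e x y -> P x ->
  (forall u v, connect e x u -> e u v -> P u -> P v) -> P y.
Proof.
move=> /connectP[p]; elim/last_ind: p y => [|p z IHp] y /=; first by move=> _ ->.
rewrite rcons_path last_rcons => /andP[xp pz] -> Px step.
apply: (step (last x p)) => //; first by apply/connectP; exists p.
exact: IHp.
Qed.

Section Switch.
Variables (n : nat) (r : 'I_n -> nat).
Implicit Types (c d p q z : Nset r) (i j : 'I_n).

Lemma sw_at i p q : sw i p q i = q i.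
Proof. by rewrite ffunE eqxx. Qed.

Lemma sw_off i p q j : j != i -> sw i p q j = p j.
Proof. by move=> /negbTE ji; rewrite ffunE ji. Qed.

Lemma sw_swl i p q z : sw i (sw i p q) z = sw i p z.
Proof. by apply/ffunP => j; rewrite !ffunE; case: (j == i). Qed.

Lemma sw_eqr i p q q' : q i = q' i -> sw i p q = sw i p q'.
Proof. by move=> qq'; apply/ffunP => j; rewrite !ffunE; case: eqP => // ->. Qed.

Lemma sw_self i p : sw i p p = p.
Proof. by apply/ffunP => j; rewrite ffunE; case: (j == i). Qed.

Lemma sw_same i p q : p i = q i -> sw i p q = p.
Proof. by move=> pq; rewrite -(sw_eqr _ pq) sw_self. Qed.

Lemma dist_sym p q : dist p q = dist q p.
Proof. by apply: eq_card => j; rewrite !inE eq_sym. Qed.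

Lemma dist_le1_eq i j p q : (dist p q <= 1)%N -> p i != q i -> j != i -> p j = q j.
Proof.
move=> /card_le1_eqP pq_le1 pqi ji; apply/eqP; apply: contraNT ji => pqj.
by apply/eqP/pq_le1; rewrite inE.
Qed.

Lemma sw_dist_le1 i p q : (dist p q <= 1)%N ->
  sw i p q = if p i == q i then p else q.
Proof.
move=> pq_le1; case: eqP => [/sw_same // | /eqP pqi].
apply/ffunP => j; rewrite ffunE; case: eqP => [-> // | /eqP ji].
exact: dist_le1_eq pq_le1 pqi ji.
Qed.

Lemma dist_sw_le1 i p q : (dist p (sw i p q) <= 1)%N.
Proof.
rewrite -(cards1 i); apply/subset_leq_card/subsetP => j; rewrite !inE.
by apply: contraR => ji; rewrite sw_off.
Qed.

Lemma dist_sw_le2 i c d p q : (dist c d <= 1)%N -> (dist (sw i c p) (sw i d q) <= 2)%N.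
Proof.
move=> cd_le1; apply: leq_trans (_ : #|i |: [set j | c j != d j]| <= 2)%N.
  apply/subset_leq_card/subsetP => j; rewrite !inE.
  by case: (eqVneq j i) => //= ji; rewrite !sw_off.
by apply: leq_trans (leq_card_setU _ _) _; rewrite cards1.
Qed.

End Switch.

Section Switchable.
Variables (n : nat) (r : 'I_n -> nat) (t : nat) (S : {set Nset r}).
Hypothesis switchS : switchable t S.
Variable i : 'I_n.
Hypothesis lt_it : (i < t)%N.
Implicit Types (a b p q x y z : Nset r).

Lemma switchable_sw_dist_le2 p q : p \in S -> q \in S -> (dist p q <= 2)%N ->
  sw i p q \in S.
Proof.
move=> pS qS; rewrite leq_eqVlt ltnS => /orP[/eqP pq2 | /sw_dist_le1 ->].
  exact: switchS.
by case: ifP.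
Qed.

Lemma switchable_sw_step x y z : x \in S -> y \in S -> (dist x y <= 1)%N ->
  sw i x z \in S -> sw i y z \in S.
Proof.
move=> xS yS xy_le1 xzS; rewrite (@sw_eqr _ _ i y z (sw i x z)) ?sw_at //.
apply: switchable_sw_dist_le2 => //; rewrite -{1}(sw_self i y).
by apply: dist_sw_le2; rewrite dist_sym.
Qed.

Lemma connected_in_sw_mem a b z : connected_in S a b ->
  (sw i a z \in S) = (sw i b z \in S).
Proof.
move=> /and3P[aS _ ab].
pose P c := c \in S /\ (sw i a z \in S) = (sw i c z \in S).
suff [] : P b by [].
apply: (connect_ind ab) => // u v _ /and3P[uS vS uv_le1] [_ auz].
split => //; rewrite auz.
by apply/idP/idP; apply: switchable_sw_step; rewrite // dist_sym.
Qed.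

End Switchable.

Section Binomials.
Variables (n : nat) (r : 'I_n -> nat) (K : fieldType).
Implicit Types (a b c p q : Nset r) (S : {set Nset r}) (i : 'I_n).

Lemma fgen_dist_le1 i p q : (dist p q <= 1)%N -> fgen K i p q = 0.
Proof.
move=> pq_le1; have qp_le1 : (dist q p <= 1)%N by rewrite dist_sym.
rewrite /fgen (sw_dist_le1 i pq_le1) (sw_dist_le1 i qp_le1) eq_sym.
by case: ifP => _; rewrite ?[xv K q * _]mulrC subrr.
Qed.

Lemma Ibin_fgen t i p q : (i < t)%N -> (dist p q <= 2)%N -> Ibin t (fgen K i p q).
Proof.
move=> lt_it; rewrite leq_eqVlt ltnS => /orP[/eqP pq2 | /fgen_dist_le1 ->].
  by apply: ideal_gen_mem; exists i, p, q.
exact: ideal_gen0.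
Qed.

Lemma fgen_exchange i a b c : c i = a i ->
  xv K c * fgen K i a b =
  xv K a * fgen K i c b + xv K (sw i b a) * fgen K i a (sw i c b).
Proof.
move=> ca; rewrite /fgen (sw_eqr b ca) (@sw_eqr _ _ i a (sw i c b) b) ?sw_at //.
by rewrite sw_swl (sw_same ca); ring.
Qed.

Definition indicator_point S : 'I_#|Nset r| -> K :=
  fun k => if enum_val k \in S then 1 else 0.

Lemma meval_xv S a : meval (indicator_point S) (xv K a) = if a \in S then 1 else 0.
Proof. by rewrite mevalXU /indicator_point enum_rankK. Qed.

Lemma Pideal_meval_indicator t S : switchable t S ->
  subideal (Pideal t S) (fun f => meval (indicator_point S) f = 0).
Proof.
move=> switchS; apply: ideal_gen_min; first exact: kernel_is_ideal.
move=> _ [[a [aS ->]] | [i [a [b [lt_it ab ->]]]]].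
  by rewrite meval_xv (negbTE aS).
have abS := connected_in_sw_mem switchS lt_it _ ab.
move: ab => /and3P[aS bS _].
have swabS : sw i a b \in S by rewrite abS sw_self.
have swbaS : sw i b a \in S by rewrite -abS sw_self.
by rewrite /fgen mevalB !mevalM !meval_xv aS bS swabS swbaS subrr.
Qed.

Lemma connected_fgen_saturation t S i a b : switchable t S -> (i < t)%N ->
  connected_in S a b ->
  exists u, meval (indicator_point S) u = 1 /\ Ibin t (u * fgen K i a b).
Proof.
move=> switchS lt_it ab; have /and3P[aS _ a_to_b] := ab.
pose P c := exists u, meval (indicator_point S) u = 1 /\
  Ibin t (u * fgen K i a (sw i c b)).
rewrite -(sw_self i b) -/(P b); apply: (connect_ind a_to_b).
  by exists 1; rewrite meval1 mul1r; split => //; apply/Ibin_fgen/leqW/dist_sw_le1.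
move=> c d ac /and3P[cS _ cd_le1] [u [u1 Iu]].
have ac_in : connected_in S a c by apply/and3P.
have caS : sw i c a \in S by rewrite -(connected_in_sw_mem switchS lt_it a ac_in) sw_self.
exists (xv K (sw i c a) * u); split; first by rewrite mevalM meval_xv caS u1 mulr1.
rewrite mulrAC fgen_exchange ?sw_at // !sw_swl.
rewrite (@sw_eqr _ _ i c (sw i d b) b) ?sw_at // mulrDl.
apply: ideal_genD; first by rewrite mulrAC; apply/ideal_genMl/Ibin_fgen/dist_sw_le2.
by rewrite -mulrA [_ * u]mulrC; apply: ideal_genMl.
Qed.

End Binomials.

Theorem corollary4p14 (n : nat) (r : 'I_n -> nat) (K : fieldType)
  (hr : forall j, (0 < r j)%N)
  (t : nat) (ht : (1 <= t <= n)%N)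
  (S : {set Nset r})
  (hS : @switchable n r t S)
  (hass : associated_prime (@Ibin n r K t) (@Pideal n r K t S)) :
  forall (m : nat) (Q : 'I_m -> Rpoly r K -> Prop),
    primary_decomposition (@Ibin n r K t) Q ->
    forall j : 'I_m,
      (forall p, radical (Q j) p <-> @Pideal n r K t S p) ->
      subideal (@Itilde n r K t S) (Q j).
Proof.
move=> m Q [Qprimary Ibin_eq _] j radQ.
have [[Qideal _] _] := Qprimary j.
apply: ideal_gen_min => // _ [i [a [b [lt_it ab ->]]]].
have [u [u1 Iu]] := connected_fgen_saturation K hS lt_it ab.
apply: (primary_mulr_cancel (u := u) (Qprimary j) radQ).
  by move=> /(Pideal_meval_indicator hS) /=; rewrite u1; apply/eqP/oner_neq0.
by rewrite mulrC; apply: (proj1 (Ibin_eq _)).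
Qed.
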